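(* Let $1<a<b$ be coprime integers and let $D,E\subseteq G$ be subdiagrams. Then \[ B(\mathbf{1}_D,\mathbf{1}_E)=\mathtt{dinv}(D,E), \] where $\mathbf{1}_D,\mathbf{1}_E\in\mathbb{R}^G$ are the indicator vectors of $D$ and $E$.
   Context: Fix coprime integers $1<a<b$. Work in the grid $\mathbb{Z}^2$, with $+x$ pointing east and $+y$ pointing north; elements of $\mathbb{Z}^2$ are called cells. Let $g:\mathbb{Z}^2\to\mathbb{Z}$, $g(x,y)=ab-ax-by$. For a cell $c=(x,y)$ and an integer $k$, write $c-ka:=(x+k,y)$ and $c-kb:=(x,y+k)$. Let $G=\{(x,y)\in\mathbb{Z}_{\ge1}^2: g(x,y)>0\}$. A subdiagram is a subset $D\subseteq G$ such that whenever $(x,y)\in D$, $(x',y')\in G$, $x'\le x$ and $y'\le y$, we have $(x',y')\in D$. Define $K(d)=\mathbf{1}_{d\ge0}-\mathbf{1}_{d\ge a}-\mathbf{1}_{d\ge b}+\mathbf{1}_{d\ge a+b}$ for $d\in\mathbb{Z}$, the quadratic form $Q(\mathbf{n})=\sum_{i,j\in G}K(g(j)-g(i))\,n_in_j$ on $\mathbb{R}^G$, and let $B$ be the unique symmetric bilinear form on $\mathbb{R}^G$ with $B(\mathbf{n},\mathbf{n})=Q(\mathbf{n})$, namely \[ B(\mathbf{n},\mathbf{n}')=\tfrac12\sum_{i,j\in G}K(g(j)-g(i))\,(n_in'_j+n'_in_j). \] For a subdiagram $D$ and $c\in D$, let $\mathrm{arm}_D(c)=\max\{k\ge0: c-ka\in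 D\}$ and $\mathrm{leg}_D(c)=\max\{k\ge 0: c-kb\in D\}$. For subdiagrams $D,E$ and $c\in D\cap E$ define the mixed cross hook slopes \[ m_D^E(c)=\frac{\mathrm{leg}_E(c)}{\mathrm{arm}_D(c)+1},\qquad M_D^E(c)=\frac{\mathrm{leg}_E(c)+1}{\mathrm{arm}_D(c)}\] (with $M_D^E(c)=+\infty$ if $\mathrm{arm}_D(c)=0$), and the cross-dinv \[ \mathtt{dinv}(D,E)=\tfrac12\Big(\#\{c\in D\cap E: m_D^E(c)<\tfrac ab<M_D^E(c)\}+\#\{c\in D\cap E: m_E^D(c)<\tfrac ab<M_E^D(c)\}\Big). \] *)

From mathcomp Require Import all_boot all_order all_algebra.
Set Implicit Arguments. Unset Strict Implicit. Unset Printing Implicit Defensive.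
Import Order.TTheory GRing.Theory Num.Theory.
Local Open Scope ring_scope.

(* Cells are pairs (x, y) of naturals; every cell of G (and hence of every
   subdiagram) has x, y >= 1, so nothing is lost by using nat coordinates.
   The shifts c - k a = (x + k, y), c - k b = (x, y + k) only increase
   coordinates. *)
Definition cell := (nat * nat)%type.

Definition gfun (a b : nat) (c : cell) : int :=
  (a * b)%:Z - (a * c.1)%:Z - (b * c.2)%:Z.

Definition inG (a b : nat) (c : cell) : bool :=
  [&& (0 < c.1)%N, (0 < c.2)%N & 0 < gfun a b c].

(* Enumeration of G: g(x,y) > 0 forces a x < a b and b y < a b, i.e.
   x < b and y < a, so G is contained in [0,b) x [0,a). *)
Definition Gseq (a b : nat) : seq cell :=
  [seq c <- [seq (x, y) | x <- iota 0 b, y <- iota 0 a] | inG a b c].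

Definition Kfun (a b : nat) (d : int) : int :=
  ((0 <= d) : int) - ((a%:Z <= d) : int) - ((b%:Z <= d) : int)
  + (((a + b)%N%:Z <= d) : int).

Definition Bform (R : realFieldType) (a b : nat) (n n' : cell -> R) : R :=
  2^-1 * \sum_(i <- Gseq a b) \sum_(j <- Gseq a b)
     (Kfun a b (gfun a b j - gfun a b i))%:~R * (n i * n' j + n' i * n j).

Definition indic (R : realFieldType) (D : pred cell) : cell -> R :=
  fun c => (D c)%:R.

Definition subdiagram (a b : nat) (D : pred cell) : Prop :=
  (forall c, D c -> inG a b c) /\
  (forall x y x' y' : nat, D (x, y) -> inG a b (x', y') ->
     (x' <= x)%N -> (y' <= y)%N -> D (x', y')).

(* arm_D(c) = max{k >= 0 : c - k a in D}; for D inside G any such k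
   satisfies x + k < b, so k ranges over [0, b). *)
Definition arm (b : nat) (D : pred cell) (c : cell) : nat :=
  \max_(k < b | D (c.1 + k, c.2)%N) k.

(* leg_D(c) = max{k >= 0 : c - k b in D}; here y + k < a. *)
Definition leg (a : nat) (D : pred cell) (c : cell) : nat :=
  \max_(k < a | D (c.1, c.2 + k)%N) k.

(* m_D^E(c) < a/b < M_D^E(c), with M = +infinity when arm_D(c) = 0 *)
Definition slope_cond (R : realFieldType) (a b : nat) (D E : pred cell)
    (c : cell) : bool :=
  ((leg a E c)%:R / (arm b D c).+1%:R < a%:R / b%:R :> R) &&
  ((arm b D c == 0)%N ||
   (a%:R / b%:R < (leg a E c).+1%:R / (arm b D c)%:R :> R)).

Definition dinv (R : realFieldType) (a b : nat) (D E : pred cell) : R :=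
  2^-1 * ((count (fun c => [&& D c, E c & slope_cond R a b D E c]) (Gseq a b))%:R
        + (count (fun c => [&& D c, E c & slope_cond R a b E D c]) (Gseq a b))%:R).

From mathcomp Require Import all_boot all_order all_algebra zify.
Set Implicit Arguments. Unset Strict Implicit. Unset Printing Implicit Defensive.
Import Order.TTheory GRing.Theory Num.Theory.
Local Open Scope ring_scope.

(* For a cell c = (x, y), whether c is counted by dinv(D, E) depends on D and E
   only through the end r of the row of D through c and the end h of the column
   of E through c: it is an indicator [hook_ind c r h].  Since D and E are
   down-closed, summing the mixed second difference of [hook_ind c] over the
   cells (r, y) of D and (x, h) of E telescopes back to [hook_ind c r_D h_E].
   On the other side, for cells i = (u, v) and j = (p, q) the symmetrised
   kernel K(g j - g i) + K(g i - g j) is the sum of these second differences at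
   the two crossing cells (p, v) and (u, q); this is a finite case analysis in
   linear arithmetic.  Summing over i in D and j in E identifies 2 B(1_D, 1_E)
   with 2 dinv(D, E). *)

(* With arm r - x and leg h - y, the last two conjuncts are the slope condition
   m < a/b < M cleared of denominators. *)
Definition hook_ind (a b x y r h : nat) : int :=
  [&& 0 < x <= r, 0 < y <= h,
      a * x + b * h < a * r + b * y + a & a * r + b * y < a * x + b * h + b]%N.

Definition hook_diff (a b x y r h : nat) : int :=
  hook_ind a b x y r h - hook_ind a b x y r.-1 h
  - hook_ind a b x y r h.-1 + hook_ind a b x y r.-1 h.-1.

Ltac decide_comparison :=
  match goal with
  | |- context [leq ?x ?y] =>
     first [ have ->: (leq x y) = true by apply/idP; lia
           | have ->: (leq x y) = false by apply/negbTE/negP; lia ]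
  | |- context [@Order.le ?d ?T ?x ?y] =>
     first [ have ->: (@Order.le d T x y) = true by apply/idP; lia
           | have ->: (@Order.le d T x y) = false by apply/negbTE/negP; lia ]
  end.

Ltac split_comparisons :=
  repeat decide_comparison; rewrite /=;
  first [ lia
        | match goal with
          | |- context [leq ?x ?y] => case: (leqP x y) => ?; split_comparisons
          | |- context [@Order.le _ _ ?x ?y] => case: (lerP x y) => ?; split_comparisons
          end ].

Lemma Kfun_sym_hook_diff (a b u v p q : nat) : (0 < a)%N -> (0 < b)%N ->
  (0 < u)%N -> (0 < v)%N -> (0 < p)%N -> (0 < q)%N ->
  Kfun a b (gfun a b (p, q) - gfun a b (u, v)) +
  Kfun a b (gfun a b (u, v) - gfun a b (p, q)) =
  hook_diff a b p v u q + hook_diff a b u q p v.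
Proof.
move=> a0 b0.
case: u => // u _; case: v => // v _; case: p => // p _; case: q => // q _.
rewrite /Kfun /gfun /hook_diff /hook_ind /=.
(* The orderings of u, p and of v, q yield the nonlinear facts lia needs. *)
case: (ltngtP u p) => hup; case: (ltngtP v q) => hvq.
all: try (have : (a * u + a <= a * p)%N by nia).
all: try (have : (a * p + a <= a * u)%N by nia).
all: try (have : (b * v + b <= b * q)%N by nia).
all: try (have : (b * q + b <= b * v)%N by nia).
all: try subst.
all: move=> *; split_comparisons.
Qed.

Lemma inG_bounds (a b x y : nat) : (0 < a)%N -> (0 < b)%N -> inG a b (x, y) ->
  [/\ (0 < x)%N, (0 < y)%N, (x < b)%N & (y < a)%N].
Proof.
move=> a0 b0 /and3P [/= x0 y0]; rewrite /gfun /= => g0.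
by split=> //; [rewrite -(ltn_pmul2l a0) | rewrite -(ltn_pmul2l b0)]; lia.
Qed.

Lemma inG_le (a b x y x' y' : nat) : inG a b (x, y) ->
  (0 < x' <= x)%N -> (0 < y' <= y)%N -> inG a b (x', y').
Proof.
move=> /and3P [/= x0 y0]; rewrite /inG /gfun /= => g0 /andP[-> hx] /andP[-> hy] /=.
have : (a * x' <= a * x)%N by rewrite leq_mul2l hx orbT.
have : (b * y' <= b * y)%N by rewrite leq_mul2l hy orbT.
lia.
Qed.

Definition transpose (D : pred cell) : pred cell := fun c => D (c.2, c.1).

Lemma inG_transpose (a b x y : nat) : inG b a (y, x) = inG a b (x, y).
Proof. by rewrite /inG /gfun /= andbCA; congr [&& _, _ & _]; apply/idP/idP; lia. Qed.

Lemma subdiagram_transpose (a b : nat) (D : pred cell) :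
  subdiagram a b D -> subdiagram b a (transpose D).
Proof.
case=> DG Ddown; split.
  by case=> y x /DG; rewrite -inG_transpose.
move=> y x y' x' Dxy G' y'y x'x.
by apply: (Ddown x y x' y') => //; rewrite -inG_transpose.
Qed.

Definition row_end (b : nat) (D : pred cell) (y : nat) : nat :=
  \max_(x < b | D (val x, y)) x.

(* Defined through the transpose so that column facts are instances of row facts. *)
Definition col_end (a : nat) (E : pred cell) (x : nat) : nat :=
  row_end a (transpose E) x.

Section Rows.
Variables (a b : nat) (D : pred cell).
Hypotheses (a0 : (0 < a)%N) (b0 : (0 < b)%N) (sD : subdiagram a b D).

Lemma row_end_lt y : (row_end b D y < b)%N.
Proof.
suff : (row_end b D y <= b.-1)%N by rewrite -ltnS prednK.
by apply/bigmax_leqP => i _; rewrite -ltnS prednK.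
Qed.

Lemma subdiagram_row x y : D (x, y) = (0 < x <= row_end b D y)%N.
Proof.
have [DG Ddown] := sD.
apply/idP/idP => [Dxy | /andP[x0 xr]].
  have [x0 _ xb _] := inG_bounds a0 b0 (DG _ Dxy); rewrite x0 /=.
  exact: (leq_bigmax_cond (F := fun i : 'I_b => nat_of_ord i) (Ordinal xb) Dxy).
have [i Di xi] : exists2 i : 'I_b, D (val i, y) & (x <= i)%N.
  apply/exists_inP; apply: contraLR xr; rewrite negb_exists_in => /forall_inP xD.
  rewrite -ltnNge -(prednK x0) ltnS; apply/bigmax_leqP => i Di.
  by have := xD i Di; rewrite -ltnNge; lia.
have [_ y0 _ _] := inG_bounds a0 b0 (DG _ Di).
apply: (Ddown _ _ _ _ Di _ xi (leqnn y)).
by apply: (inG_le (DG _ Di)); apply/andP.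
Qed.

Lemma arm_row_end x y : D (x, y) -> arm b D (x, y) = (row_end b D y - x)%N.
Proof.
rewrite subdiagram_row => /andP[x0 xr].
rewrite /arm (eq_bigl (fun k : 'I_b => (k <= row_end b D y - x)%N)); last first.
  by move=> k /=; rewrite subdiagram_row; lia.
have lt_b : (row_end b D y - x < b)%N by have := row_end_lt y; lia.
apply/eqP; rewrite eqn_leq; apply/andP; split; first exact/bigmax_leqP.
exact: (leq_bigmax_cond (F := fun i : 'I_b => nat_of_ord i) (Ordinal lt_b) (leqnn _)).
Qed.

End Rows.

Section Columns.
Variables (a b : nat) (E : pred cell).
Hypotheses (a0 : (0 < a)%N) (b0 : (0 < b)%N) (sE : subdiagram a b E).

Lemma col_end_lt x : (col_end a E x < a)%N.
Proof. exact: row_end_lt. Qed.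

Lemma subdiagram_col x y : E (x, y) = (0 < y <= col_end a E x)%N.
Proof. exact: (subdiagram_row b0 a0 (subdiagram_transpose sE) y x). Qed.

Lemma leg_col_end x y : E (x, y) -> leg a E (x, y) = (col_end a E x - y)%N.
Proof. exact: (arm_row_end b0 a0 (subdiagram_transpose sE) (x := y) (y := x)). Qed.

End Columns.

Lemma slope_ineqE (R : realFieldType) (a b l m : nat) : (0 < b)%N ->
  ((l%:R / m.+1%:R < a%:R / b%:R :> R) &&
   ((m == 0)%N || (a%:R / b%:R < l.+1%:R / m%:R :> R))) =
  ((l * b < a * m.+1) && (a * m < b * l.+1))%N.
Proof.
move=> b0; have bp : 0 < b%:R :> R by rewrite ltr0n.
congr andb; first by rewrite ltr_pdivrMr // mulrAC ltr_pdivlMr // -!natrM ltr_nat.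
case: m => [|m] /=; first by rewrite muln0 muln_gt0 b0.
by rewrite ltr_pdivrMr // mulrAC ltr_pdivlMr // -!natrM ltr_nat [(l.+1 * b)%N]mulnC.
Qed.

Lemma hook_ind_slope_cond (R : realFieldType) (a b : nat) (D E : pred cell) x y :
  (0 < a)%N -> (0 < b)%N -> subdiagram a b D -> subdiagram a b E ->
  hook_ind a b x y (row_end b D y) (col_end a E x) =
  [&& D (x, y), E (x, y) & slope_cond R a b D E (x, y)].
Proof.
move=> a0 b0 sD sE; rewrite /hook_ind.
case Dxy: (D (x, y)); last by move: Dxy; rewrite (subdiagram_row a0 b0 sD) => ->.
case Exy: (E (x, y)); last by move: Exy; rewrite (subdiagram_col a0 b0 sE) => ->; rewrite andbF.
rewrite /slope_cond (arm_row_end a0 b0 sD Dxy) (leg_col_end a0 b0 sE Exy) slope_ineqE //.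
move: Dxy Exy; rewrite (subdiagram_row a0 b0 sD) (subdiagram_col a0 b0 sE).
move=> /[dup] xr -> /[dup] yh -> /=.
have [k ->] : exists k, row_end b D y = (x + k)%N by exists (row_end b D y - x)%N; lia.
have [m ->] : exists m, col_end a E x = (y + m)%N by exists (col_end a E x - y)%N; lia.
rewrite !addKn !mulnDr !mulnS; congr (Posz (nat_of_bool _)).
by apply/idP/idP => /andP[h1 h2]; apply/andP; split; lia.
Qed.

Lemma count_Posz (T : Type) (P : pred T) (s : seq T) :
  (count P s)%:Z = \sum_(i <- s) (P i)%:Z.
Proof. by elim: s => [|x s IH]; rewrite ?big_nil // big_cons /= PoszD IH. Qed.

Lemma sum_Gseq (a b : nat) (P : pred cell) (F : cell -> int) :
  (forall c, P c -> inG a b c) ->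
  \sum_(c <- Gseq a b) (P c)%:Z * F c =
  \sum_(x <- iota 0 b) \sum_(y <- iota 0 a) (P (x, y))%:Z * F (x, y).
Proof.
move=> PG; rewrite /Gseq big_filter big_mkcond big_allpairs.
apply: eq_bigr => x _; apply: eq_bigr => y _.
case: ifP => // notG; case Pxy: (P (x, y)); last by rewrite mul0r.
by rewrite (PG _ Pxy) in notG.
Qed.

Lemma sum_iota_telescope (f : nat -> int) (n r : nat) : (r < n)%N ->
  \sum_(x <- iota 0 n) (0 < x <= r)%N%:Z * (f x - f x.-1) = f r - f 0%N.
Proof.
have partial m : \sum_(x <- iota 0 m.+1) (0 < x <= r)%N%:Z * (f x - f x.-1) =
    f (minn r m) - f 0%N.
  elim: m => [|m IH]; first by rewrite big_seq1 minn0 subrr mul0r.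
  rewrite -addn1 iotaD big_cat IH big_seq1 add0n.
  case: (leqP m.+1 r) => hm; first by rewrite (minn_idPr (ltnW hm)) /= mul1r; lia.
  by rewrite (minn_idPl (ltnSE hm)) andbF /= mul0r addr0.
by case: n => // n rn; rewrite partial (minn_idPl _).
Qed.

Section Summation.
Variables (a b : nat).
Hypotheses (a0 : (0 < a)%N) (b0 : (0 < b)%N).

Lemma sum_hook_diff (D E : pred cell) x y :
  subdiagram a b D -> subdiagram a b E ->
  \sum_(u <- iota 0 b) (D (u, y))%:Z *
     \sum_(q <- iota 0 a) (E (x, q))%:Z * hook_diff a b x y u q =
  hook_ind a b x y (row_end b D y) (col_end a E x).
Proof.
move=> sD sE.
have hook_ind_r0 h : hook_ind a b x y 0 h = 0.
  by rewrite /hook_ind (_ : (0 < x <= 0)%N = false) //; lia.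
have hook_ind_h0 r : hook_ind a b x y r 0 = 0.
  by rewrite /hook_ind (_ : (0 < y <= 0)%N = false) ?andbF //; lia.
have := sum_iota_telescope (fun r => hook_ind a b x y r (col_end a E x)) (row_end_lt D b0 y).
rewrite hook_ind_r0 subr0 => <-.
apply: eq_bigr => u _; rewrite (subdiagram_row a0 b0 sD); congr (_ * _).
have := sum_iota_telescope (fun h => hook_ind a b x y u h - hook_ind a b x y u.-1 h)
  (col_end_lt E a0 x).
rewrite !hook_ind_h0 subrr subr0 => <-.
by apply: eq_bigr => q _; rewrite (subdiagram_col a0 b0 sE) /hook_diff; congr (_ * _); lia.
Qed.

Lemma count_slope_cond (R : realFieldType) (D E : pred cell) :
  subdiagram a b D -> subdiagram a b E ->
  \sum_(i <- Gseq a b) \sum_(j <- Gseq a b)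
     (D i)%:Z * ((E j)%:Z * hook_diff a b j.1 i.2 i.1 j.2) =
  (count (fun c => [&& D c, E c & slope_cond R a b D E c]) (Gseq a b))%:Z.
Proof.
move=> sD sE; rewrite count_Posz.
under [RHS]eq_bigr => c _ do rewrite -mulnb PoszM.
rewrite (sum_Gseq _ sD.1).
transitivity (\sum_(x <- iota 0 b) \sum_(y <- iota 0 a) \sum_(u <- iota 0 b)
  (D (u, y))%:Z * \sum_(q <- iota 0 a) (E (x, q))%:Z * hook_diff a b x y u q).
  under eq_bigr => i _ do rewrite -mulr_sumr.
  rewrite (sum_Gseq _ sD.1).
  under eq_bigr => u _ do under eq_bigr => y _ do rewrite (sum_Gseq _ sE.1) mulr_sumr.
  under eq_bigr => u _ do rewrite exchange_big.
  rewrite exchange_big; apply: eq_bigr => x _; exact: exchange_big.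
apply: eq_bigr => x _; apply: eq_bigr => y _.
by rewrite sum_hook_diff // (hook_ind_slope_cond R x y a0 b0 sD sE) -mulnb PoszM.
Qed.

Lemma sum_Kfun_indicators (R : realFieldType) (D E : pred cell) :
  subdiagram a b D -> subdiagram a b E ->
  \sum_(i <- Gseq a b) \sum_(j <- Gseq a b) Kfun a b (gfun a b j - gfun a b i) *
     ((D i)%:Z * (E j)%:Z + (E i)%:Z * (D j)%:Z) =
  (count (fun c => [&& D c, E c & slope_cond R a b D E c]) (Gseq a b))%:Z +
  (count (fun c => [&& D c, E c & slope_cond R a b E D c]) (Gseq a b))%:Z.
Proof.
move=> sD sE.
under eq_bigr => i _ do under eq_bigr => j _ do rewrite mulrDr.
under eq_bigr => i _ do rewrite big_split.
rewrite big_split /= [X in _ + X = _]exchange_big -big_split /=.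
under eq_bigr => i _ do rewrite -big_split /=.
transitivity (\sum_(i <- Gseq a b) \sum_(j <- Gseq a b)
   ((D i)%:Z * ((E j)%:Z * hook_diff a b j.1 i.2 i.1 j.2) +
    (E j)%:Z * ((D i)%:Z * hook_diff a b i.1 j.2 j.1 i.2))).
  apply: eq_bigr => -[u v] _; apply: eq_bigr => -[p q] _.
  case Duv: (D (u, v)); last by rewrite !(mulr0, mul0r, addr0).
  case Epq: (E (p, q)); last by rewrite !(mulr0, mul0r, addr0).
  have [u0 v0 _ _] := inG_bounds a0 b0 (sD.1 _ Duv).
  have [p0 q0 _ _] := inG_bounds a0 b0 (sE.1 _ Epq).
  by rewrite !mul1r !mulr1 Kfun_sym_hook_diff.
under eq_bigr => i _ do rewrite big_split.
rewrite big_split /= (count_slope_cond R sD sE); congr (_ + _).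
under eq_count => c do rewrite andbCA.
rewrite -(count_slope_cond R sE sD) exchange_big /=.
by apply: eq_bigr => j _; apply: eq_bigr => i _; rewrite mulrCA.
Qed.

End Summation.

Theorem theorem1p2 (R : realFieldType) (a b : nat) :
  (1 < a)%N -> (a < b)%N -> coprime a b ->
  forall D E : pred cell, subdiagram a b D -> subdiagram a b E ->
  @Bform R a b (indic R D) (indic R E) = dinv R a b D E.
Proof.
move=> a1 ab _ D E sD sE.
have a0 : (0 < a)%N := ltnW a1.
have b0 : (0 < b)%N := ltn_trans a0 ab.
have intr_sum := big_morph intr (@intrD R) (mulr0z 1).
rewrite /Bform /dinv !pmulrn -intrD -(sum_Kfun_indicators a0 b0 R sD sE) intr_sum.
congr (_ * _); apply: eq_bigr => i _; rewrite intr_sum; apply: eq_bigr => j _.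
by rewrite !(intrM R, intrD R) /indic !pmulrn.
Qed.
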